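(* Let $\Sigma=(\mathbb{N}_0,X,U,\mathscr{U},\phi)$ be a control system as in the standing setup (in particular $\mathscr U$ is a compact metrizable space and $\phi$ is continuous), and let $Q\subset X$ be a compact control set with nonempty interior. Then the following are equivalent: (1) $Q$ is equi-invariant in the mean; (2) $Q$ is finitely equi-invariant in the mean; (3) $Q$ has bounded invariance complexity in the mean.
   Context: Standing setup: $(X,d)$ is a metric space, $U$ is a compact metric space, and $F:X\times U\to X$ is a map such that $F_u:=F(\cdot,u)$ is continuous for every $u\in U$. Let $\mathscr U=U^{\mathbb N_0}$ with the product topology. For $\omega=(\omega_0,\omega_1,\dots)\in\mathscr U$, $x\in X$, set $\phi(0,x,\omega)=x$ and $\phi(k,x,\omega)=F_{\omega_{k-1}}\circ\cdots\circ F_{\omega_0}(x)$ for $k\ge1$. It is assumed that $\phi:\mathbb N_0\times X\times\mathscr U\to X$ is continuous. Notation: $\mathbb N=\{1,2,\dots\}$; $B(x,\delta)$ is the open ball; $d(y,Q)=\inf_{q\in Q}d(y,q)$. Control set: $D\subset X$ is a control set if (i) for every $x\in D$ there is $\omega\in\mathscr U$ with $\phi(k,x,\omega)\in D$ for all $k\in\mathbb N_0$; (ii) for every $x\in D$, $D\subset\operatorname{cl}\mathcal O^+(x)$, where $\mathcal O^+(x)=\{\phi(m,x,\omega):m\in\mathbb N_0,\omega\in\mathscr U\}$; (iii) $D$ is maximal with (i) and (ii). Equi-invariance in the mean: $x\in Q$ is a finitely equi-invariant point in the mean of $Q$ if for every $\varepsilon>0$ there exist $\delta>0$ and a finite set $F\subset\mathscr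 U$ such that for every $y\in B(x,\delta)\cap Q$ there is $\omega\in F$ with $\frac1n\sum_{i=0}^{n-1}d(\phi(i,y,\omega),Q)<\varepsilon$ for all $n\in\mathbb N$; it is an equi-invariant point in the mean if this holds with $F$ a singleton. $Q$ is (finitely) equi-invariant in the mean if every point of $Q$ is such a point. Invariance complexity in the mean: $\hat Q^\varepsilon_{n,\omega}=\{x\in Q:\max_{1\le k\le n}\frac1k\sum_{i=0}^{k-1}d(\phi(i,x,\omega),Q)<\varepsilon\}$; $F\subset\mathscr U$ is $(n,\varepsilon,Q)$-spanning in the mean if $Q=\bigcup_{\omega\in F}\hat Q^\varepsilon_{n,\omega}$; $\hat r_{inv}(n,\varepsilon,Q)$ is the minimal cardinality of such $F$; $Q$ has bounded invariance complexity in the mean if for every $\varepsilon>0$ there is $C$ with $\hat r_{inv}(n,\varepsilon,Q)\le C$ for all $n\in\mathbb N$. *)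

From HB Require Import structures.
From mathcomp Require Import all_boot all_order all_algebra.
From mathcomp Require Import all_classical all_reals.
From mathcomp Require Import ereal.
From Stdlib Require Lists.List.
Set Implicit Arguments. Unset Strict Implicit. Unset Printing Implicit Defensive.
Import Order.TTheory GRing.Theory Num.Theory.
Local Open Scope classical_set_scope.
Local Open Scope ring_scope.

Section Defs.
Variable R : realType.

Definition is_metric (T : Type) (d : T -> T -> R) : Prop :=
  [/\ forall x y, 0 <= d x y,
      forall x y, d x y = 0 <-> x = y,
      forall x y, d x y = d y x
    & forall x y z, d x z <= d x y + d y z].

Definition mball (T : Type) (d : T -> T -> R) (x : T) (r : R) : set T :=
  [set y | d x y < r].

Definition mopen (T : Type) (d : T -> T -> R) (A : set T) : Prop :=
  forall x, A x -> exists2 r : R, 0 < r & mball d x r `<=` A.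

Definition mcompact (T : Type) (d : T -> T -> R) (K : set T) : Prop :=
  forall (I : Type) (V : I -> set T),
    (forall i, mopen d (V i)) -> K `<=` \bigcup_i V i ->
    exists s : seq I, K `<=` [set x | exists2 i, Stdlib.Lists.List.In i s & V i x].

Definition mclosure (T : Type) (d : T -> T -> R) (A : set T) : set T :=
  [set y | forall e : R, 0 < e -> exists2 a, A a & d y a < e].

Definition mcontinuous (T S : Type) (dT : T -> T -> R) (dS : S -> S -> R)
  (f : T -> S) : Prop :=
  forall x (e : R), 0 < e -> exists2 del : R, 0 < del &
    forall y, dT x y < del -> dS (f x) (f y) < e.

Definition dist_set (T : Type) (d : T -> T -> R) (y : T) (Q : set T) : R :=
  inf [set d y q | q in Q].

Definition nonempty_interior (T : Type) (d : T -> T -> R) (Q : set T) : Prop :=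
  exists x, exists2 r : R, 0 < r & mball d x r `<=` Q.

End Defs.

Fixpoint phi (X U : Type) (F : X -> U -> X) (k : nat) (x : X) (w : nat -> U) : X :=
  match k with
  | 0 => x
  | k'.+1 => F (phi F k' x w) (w k')
  end.

Section Defs2.
Variable R : realType.
Variables (X U : Type) (d : X -> X -> R) (dU : U -> U -> R) (F : X -> U -> X).

(* Continuity of phi : N_0 x X x U^{N_0} -> X, with N_0 discrete and U^{N_0}
   carrying the product topology (basic neighbourhoods: finitely many
   coordinates within eta). *)
Definition phi_continuous : Prop :=
  forall k x (w : nat -> U) (e : R), 0 < e ->
    exists del : R, exists N : nat, exists eta : R,
      [/\ 0 < del, 0 < eta &
        forall y (w' : nat -> U), d x y < del ->
          (forall i, (i < N)%N -> dU (w i) (w' i) < eta) ->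
          d (phi F k x w) (phi F k y w') < e].

Definition orbit_plus (x : X) : set X :=
  [set y | exists m w, y = phi F m x w].

Definition control_set_cond (D : set X) : Prop :=
  (forall x, D x -> exists w : nat -> U, forall k, D (phi F k x w)) /\
  (forall x, D x -> D `<=` mclosure d (orbit_plus x)).

Definition control_set (D : set X) : Prop :=
  control_set_cond D /\
  (forall D', control_set_cond D' -> D `<=` D' -> D' = D).

Definition mean_dist (Q : set X) (n : nat) (y : X) (w : nat -> U) : R :=
  (n%:R)^-1 * \sum_(i < n) dist_set d (phi F i y w) Q.

Definition finitely_equi_invariant_point_mean (Q : set X) (x : X) : Prop :=
  Q x /\
  forall e : R, 0 < e -> exists del : R, exists Fs : seq (nat -> U),
    0 < del /\
    forall y, mball d x del y -> Q y ->
      exists2 w, Stdlib.Lists.List.In w Fs & forall n, (0 < n)%N -> mean_dist Q n y w < e.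

Definition equi_invariant_point_mean (Q : set X) (x : X) : Prop :=
  Q x /\
  forall e : R, 0 < e -> exists del : R, exists w : nat -> U,
    0 < del /\
    forall y, mball d x del y -> Q y ->
      forall n, (0 < n)%N -> mean_dist Q n y w < e.

Definition finitely_equi_invariant_mean (Q : set X) : Prop :=
  forall x, Q x -> finitely_equi_invariant_point_mean Q x.

Definition equi_invariant_mean (Q : set X) : Prop :=
  forall x, Q x -> equi_invariant_point_mean Q x.

Definition hatQ (Q : set X) (n : nat) (e : R) (w : nat -> U) : set X :=
  [set x | Q x /\ forall k, (1 <= k <= n)%N -> mean_dist Q k x w < e].

Definition spanning_mean (n : nat) (e : R) (Q : set X) (Fs : seq (nat -> U)) : Prop :=
  Q = [set x | exists2 w, Stdlib.Lists.List.In w Fs & hatQ Q n e w x].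

(* minimal cardinality of an (n,eps,Q)-spanning set in the mean
   (+oo if there is none) *)
Definition r_inv_mean (n : nat) (e : R) (Q : set X) : \bar R :=
  ereal_inf [set ((size Fs)%:R)%:E | Fs in [set Fs | spanning_mean n e Q Fs]].

Definition bounded_inv_complexity_mean (Q : set X) : Prop :=
  forall e : R, 0 < e -> exists C : R,
    forall n, (0 < n)%N -> (r_inv_mean n e Q <= C%:E)%E.

End Defs2.

From HB Require Import structures.
From mathcomp Require Import all_boot all_order all_algebra.
From mathcomp Require Import all_classical all_reals.
From mathcomp Require Import ereal.
From mathcomp Require Import zify.
From Stdlib Require Lists.List.
Import Order.TTheory GRing.Theory Num.Theory.
Local Open Scope classical_set_scope.
Local Open Scope ring_scope.

Set Implicit Arguments. Unset Strict Implicit. Unset Printing Implicit Defensive.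

(* (1) => (2) is immediate.  (2) => (3): cover the compact set Q by finitely
   many of the balls given by (2); the union of their finite families of
   controls spans Q in the mean at every horizon.  (3) => (1) is the heart:
   - bounded complexity gives, for each horizon n, K controls spanning Q up
     to time n; a cluster point in the product U^N (built coordinatewise from
     the compactness of U) yields K controls Gc i that work for ALL times;
   - the sets A_i of initial states whose means under Gc i stay small are
     closed and cover Q, so by a Baire-type argument one of them contains a
     ball inside Q;
   - from every x in Q one can steer, robustly in the initial state and
     without leaving a neighbourhood of Q, into that ball (Q is a control
     set), and then switch to Gc i. *)

Section Trajectories.
Variables (X U : Type) (F : X -> U -> X).

Definition concat_control (m : nat) (w o : nat -> U) : nat -> U :=
  fun i => if (i < m)%N then w i else o (i - m)%N.

Lemma phi_eq_prefix k x (w w' : nat -> U) :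
  (forall i, (i < k)%N -> w i = w' i) -> phi F k x w = phi F k x w'.
Proof.
elim: k => [//|k IH] Hww' /=.
rewrite IH => [|i Hi]; last exact/Hww'/ltnW.
by rewrite Hww'.
Qed.

Lemma phi_shift j m x (w : nat -> U) :
  phi F (j + m) x w = phi F j (phi F m x w) (fun i => w (i + m)%N).
Proof. by elim: j => [//|j IH] /=; rewrite IH. Qed.

Lemma phi_concat_prefix i m x (w o : nat -> U) :
  (i <= m)%N -> phi F i x (concat_control m w o) = phi F i x w.
Proof.
move=> Him; apply: phi_eq_prefix => l Hl.
by rewrite /concat_control (leq_trans Hl Him).
Qed.

Lemma phi_concat_suffix j m x (w o : nat -> U) :
  phi F (j + m) x (concat_control m w o) = phi F j (phi F m x w) o.
Proof.
rewrite phi_shift phi_concat_prefix //; apply: phi_eq_prefix => l _.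
by rewrite /concat_control ltnNge leq_addl /= addnK.
Qed.

End Trajectories.

Section Metric.
Variable R : realType.
Variables (X : Type) (d : X -> X -> R).
Hypothesis hd : is_metric d.

Lemma metric_ge0 x y : 0 <= d x y. Proof. by case: hd. Qed.
Lemma metric_refl x : d x x = 0. Proof. by case: hd => _ H _ _; apply/H. Qed.
Lemma metric_sym x y : d x y = d y x. Proof. by case: hd. Qed.
Lemma metric_triangle x y z : d x z <= d x y + d y z. Proof. by case: hd. Qed.

Lemma mball_center x r : 0 < r -> mball d x r x.
Proof. by rewrite /mball /= metric_refl. Qed.

Lemma mball_open x r : mopen d (mball d x r).
Proof.
move=> y Hy; exists (r - d x y); first by rewrite subr_gt0.
move=> z Hz; rewrite /mball /=.
by apply: le_lt_trans (metric_triangle x y z) _; rewrite -ltrBrDl.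
Qed.

Variable Q : set X.
Hypothesis Qne : exists q, Q q.

Lemma dist_set_le y q : Q q -> dist_set d y Q <= d y q.
Proof.
move=> Qq; apply: ge_inf; last by exists q.
by exists 0 => z [p _ <-]; apply: metric_ge0.
Qed.

Lemma dist_set_lipschitz a b : dist_set d a Q <= d a b + dist_set d b Q.
Proof.
rewrite -lerBlDl; apply: lb_le_inf; first by case: Qne => q Hq; exists (d b q), q.
move=> z [q Qq <-]; rewrite lerBlDl.
exact: le_trans (dist_set_le a Qq) (metric_triangle a b q).
Qed.

End Metric.

Arguments mball_open {R X d} hd x r.

Lemma size_length (T : Type) (s : seq T) : size s = List.length s.
Proof. by elim: s => //= a s ->. Qed.

Lemma finite_common_parameters (R : realType) n (P : nat -> nat -> R -> Prop) :
  (forall i T T' r r', (T <= T')%N -> 0 < r' -> r' <= r -> P i T r -> P i T' r') ->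
  (forall i, (i < n)%N -> exists T, exists2 r, 0 < r & P i T r) ->
  exists T, exists2 r, 0 < r & forall i, (i < n)%N -> P i T r.
Proof.
move=> Pmono; elim: n => [|n IH] HP; first by exists 0%N, 1.
have [T1 [r1 r1_gt0 H1]] := IH (fun i Hi => HP i (ltnW Hi)).
have [T2 [r2 r2_gt0 H2]] := HP n (ltnSn n).
have r_gt0 : 0 < Order.min r1 r2 by rewrite lt_min r1_gt0 r2_gt0.
exists (maxn T1 T2), (Order.min r1 r2) => // i.
rewrite ltnS leq_eqVlt => /orP [/eqP ->|Hi].
  by apply: (Pmono _ T2 _ r2) => //; rewrite ?leq_maxr ?ge_min ?lexx ?orbT.
by apply: (Pmono _ T1 _ r1) => //; rewrite ?leq_maxl ?ge_min ?lexx //; apply: H1.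
Qed.

Lemma finite_common_radius (R : realType) n (P : nat -> R -> Prop) :
  (forall i r r', 0 < r' -> r' <= r -> P i r -> P i r') ->
  (forall i, (i < n)%N -> exists2 r, 0 < r & P i r) ->
  exists2 r, 0 < r & forall i, (i < n)%N -> P i r.
Proof.
move=> Pmono HP.
have [|i Hi|_ [r r_gt0 H]] := @finite_common_parameters R n (fun i _ r => P i r).
- by move=> i T T' r r' _; apply: Pmono.
- by have [r r_gt0 Hr] := HP i Hi; exists 0%N, r.
- by exists r.
Qed.

Section Means.
Variable R : realType.
Variables (X U : Type) (d : X -> X -> R) (F : X -> U -> X) (Q : set X).

Definition sum_dist (k : nat) (y : X) (w : nat -> U) : R :=
  \sum_(i < k) dist_set d (phi F i y w) Q.

Definition mean_bounded (eps : R) (w : nat -> U) : set X :=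
  [set a | forall k, (0 < k)%N -> mean_dist d F Q k a w <= eps].

Lemma mean_distE n y w : mean_dist d F Q n y w = (n%:R)^-1 * sum_dist n y w.
Proof. by []. Qed.

Lemma mean_dist_le n y w (eta : R) : (0 < n)%N ->
  (mean_dist d F Q n y w <= eta) = (sum_dist n y w <= n%:R * eta).
Proof. by move=> Hn; rewrite mean_distE ler_pdivrMl // ltr0n. Qed.

Lemma mean_dist_ge n y w (eta : R) : (0 < n)%N ->
  (eta <= mean_dist d F Q n y w) = (n%:R * eta <= sum_dist n y w).
Proof. by move=> Hn; rewrite mean_distE ler_pdivlMl // ltr0n. Qed.

Lemma sum_le_const n (f : nat -> R) (eta : R) :
  (forall i, (i < n)%N -> f i <= eta) -> \sum_(i < n) f i <= n%:R * eta.
Proof.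
move=> Hf; apply: (@le_trans _ _ (\sum_(i < n) eta)).
  by apply: ler_sum => i _; apply: Hf.
by rewrite sumr_const card_ord mulr_natl.
Qed.

Lemma mean_dist_concat n m y (w o : nat -> U) (eta : R) : (0 < n)%N ->
  (forall i, (i < m)%N -> dist_set d (phi F i y w) Q <= eta) ->
  (forall k, (0 < k)%N -> mean_dist d F Q k (phi F m y w) o <= eta) ->
  mean_dist d F Q n y (concat_control m w o) <= eta.
Proof.
move=> Hn Hhead Htail; rewrite mean_dist_le //.
pose f i := dist_set d (phi F i y (concat_control m w o)) Q.
have Hf i : (i < m)%N -> f i <= eta.
  by move=> Hi; rewrite /f phi_concat_prefix ?Hhead // ltnW.
case: (leqP n m) => Hnm.
  by apply: (@sum_le_const _ f) => i Hi; apply/Hf/(leq_trans Hi).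
have Hk : (0 < n - m)%N by rewrite subn_gt0.
rewrite /sum_dist -(subnKC (ltnW Hnm)) big_split_ord /= natrD mulrDl.
apply: lerD; first exact: (@sum_le_const _ f).
apply: le_trans (_ : sum_dist (n - m) (phi F m y w) o <= _); last first.
  by rewrite -mean_dist_le // Htail.
by apply: ler_sum => i _; rewrite addnC phi_concat_suffix.
Qed.

Hypothesis hd : is_metric d.
Hypothesis Qne : exists q, Q q.

Lemma sum_dist_perturb k y w y' w' (e : R) : 0 <= e ->
  (forall i, (i < k)%N -> d (phi F i y w) (phi F i y' w') <= e / (k.+1)%:R) ->
  sum_dist k y w <= sum_dist k y' w' + e.
Proof.
move=> He Hclose.
apply: (@le_trans _ _ (\sum_(i < k)
    (d (phi F i y w) (phi F i y' w') + dist_set d (phi F i y' w') Q))).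
  by apply: ler_sum => i _; apply: dist_set_lipschitz.
rewrite big_split /= addrC lerD2l.
apply: le_trans (sum_le_const Hclose) _.
rewrite mulrA ler_pdivrMr ?ltr0n // [_ * e]mulrC.
by rewrite ler_wpM2l // ler_nat.
Qed.

End Means.

Section Continuity.
Variable R : realType.
Variables (X U : Type) (d : X -> X -> R) (dU : U -> U -> R) (F : X -> U -> X).
Variable Q : set X.
Hypothesis hd : is_metric d.
Hypothesis hdU : is_metric dU.
Hypothesis hphi : phi_continuous d dU F.
Hypothesis Qne : exists q, Q q.

Lemma phi_cont_state k x w (e : R) : 0 < e ->
  exists2 del, 0 < del & forall y, d x y < del -> d (phi F k x w) (phi F k y w) < e.
Proof.
move=> He; have [del [N [eta [del_gt0 eta_gt0 Hcont]]]] := hphi k x w He.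
by exists del => // y Hy; apply: Hcont => // i _; rewrite metric_refl.
Qed.

Lemma phi_cont_control k x w (e : R) : 0 < e ->
  exists T, exists2 eta, 0 < eta & forall w',
    (forall i, (i < T)%N -> dU (w i) (w' i) < eta) ->
    d (phi F k x w) (phi F k x w') < e.
Proof.
move=> He; have [del [N [eta [del_gt0 eta_gt0 Hcont]]]] := hphi k x w He.
by exists N, eta => // w' Hw'; apply: Hcont; rewrite ?metric_refl.
Qed.

Lemma sum_dist_cont_state k x w (e : R) : 0 < e ->
  exists2 del, 0 < del & forall y, d x y < del ->
    sum_dist d F Q k x w <= sum_dist d F Q k y w + e.
Proof.
move=> He; have Hek : 0 < e / (k.+1)%:R by rewrite divr_gt0 // ltr0n.
have [del del_gt0 Hdel] := @finite_common_radius R k (fun i r => forall y,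
    d x y < r -> d (phi F i x w) (phi F i y w) < e / (k.+1)%:R)
  (fun i r r' _ Hr H y Hy => H y (lt_le_trans Hy Hr))
  (fun i _ => phi_cont_state i x w Hek).
exists del => // y Hy; apply: sum_dist_perturb (ltW He) _ => // i Hi.
exact/ltW/Hdel.
Qed.

Lemma sum_dist_cont_control k x w (e : R) : 0 < e ->
  exists T, exists2 eta, 0 < eta & forall w',
    (forall i, (i < T)%N -> dU (w i) (w' i) < eta) ->
    sum_dist d F Q k x w <= sum_dist d F Q k x w' + e.
Proof.
move=> He; have Hek : 0 < e / (k.+1)%:R by rewrite divr_gt0 // ltr0n.
have [T [eta eta_gt0 Heta]] := @finite_common_parameters R k (fun i T r =>
    forall w', (forall j, (j < T)%N -> dU (w j) (w' j) < r) ->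
    d (phi F i x w) (phi F i x w') < e / (k.+1)%:R)
  (fun i T T' r r' HT _ Hr H w' Hw' =>
     H w' (fun j Hj => lt_le_trans (Hw' j (leq_trans Hj HT)) Hr))
  (fun i _ => phi_cont_control i x w Hek).
exists T, eta => // w' Hw'; apply: sum_dist_perturb (ltW He) _ => // i Hi.
exact/ltW/Heta.
Qed.

Lemma mean_bounded_closed (eps : R) (w : nat -> U) :
  mclosure d (mean_bounded d F Q eps w) `<=` mean_bounded d F Q eps w.
Proof.
move=> y Hy k Hk; rewrite mean_dist_le //; apply/ler_addgt0Pr => e He.
have [del del_gt0 Hdel] := sum_dist_cont_state k y w He.
have [a Ha Hya] := Hy del del_gt0.
by apply: le_trans (Hdel a Hya) _; rewrite lerD2r -mean_dist_le // Ha.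
Qed.

Lemma mean_lower_bound_stable (eps : R) k x w : (0 < k)%N ->
  eps < mean_dist d F Q k x w ->
  exists T, exists2 eta, 0 < eta & (k <= T)%N /\ forall w',
    (forall i, (i < T)%N -> dU (w i) (w' i) < eta) -> eps <= mean_dist d F Q k x w'.
Proof.
move=> Hk Hgt.
have Hgap : 0 < k%:R * (mean_dist d F Q k x w - eps) by rewrite mulr_gt0 ?ltr0n ?subr_gt0.
have [T [eta eta_gt0 Heta]] := sum_dist_cont_control k x w Hgap.
exists (maxn T k), eta => //; split => [|w' Hw']; first exact: leq_maxr.
have := Heta w' (fun i Hi => Hw' i (leq_trans Hi (leq_maxl _ _))).
rewrite mean_distE mulrBr mulrA mulfV ?pnatr_eq0 -?lt0n // mul1r => Hle.
by rewrite mean_dist_ge //; move: Hle; rewrite addrCA -lerBlDl subrr subr_ge0.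
Qed.

End Continuity.

Section ControlSets.
Variable R : realType.
Variables (X U : Type) (d : X -> X -> R) (dU : U -> U -> R) (F : X -> U -> X).
Hypothesis hd : is_metric d.
Hypothesis hdU : is_metric dU.
Hypothesis hphi : phi_continuous d dU F.

Lemma orbit_plus_phi p a i w : orbit_plus F p a -> orbit_plus F p (phi F i a w).
Proof.
by case=> m [v ->]; exists (i + m)%N, (concat_control m v w); rewrite phi_concat_suffix.
Qed.

Lemma closure_orbit_phi p x i w : mclosure d (orbit_plus F p) x ->
  mclosure d (orbit_plus F p) (phi F i x w).
Proof.
move=> Hx e He; have [del del_gt0 Hdel] := phi_cont_state hdU hphi i x w He.
have [a Ha Hxa] := Hx del del_gt0.
by exists (phi F i a w); [apply: orbit_plus_phi | apply: Hdel].
Qed.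

Lemma closure_orbit_reach p z : orbit_plus F p z ->
  mclosure d (orbit_plus F z) `<=` mclosure d (orbit_plus F p).
Proof.
move=> Hz y Hy e He; have [a [m [w ->]] Hya] := Hy e He.
by exists (phi F m z w) => //; apply: orbit_plus_phi.
Qed.

(* By maximality, Q contains every trajectory between two of its points:
   adding the intermediate points to Q still gives a set satisfying the
   control set conditions. *)
Lemma trajectory_in_control_set (Q : set X) x m w :
  control_set d F Q -> Q x -> Q (phi F m x w) ->
  forall i, (i <= m)%N -> Q (phi F i x w).
Proof.
move=> [[Qinv Qreach] Qmax] Qx Qm.
pose D := fun z => Q z \/ exists2 i, (i <= m)%N & z = phi F i x w.
have Dreach z : Q z -> D `<=` mclosure d (orbit_plus F z).
  move=> Qz y [Qy|[i _ ->]]; first exact: Qreach.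
  exact/closure_orbit_phi/Qreach.
have Dcond : control_set_cond d F D.
  split=> z [Qz|[i Hi ->]].
  - by have [v Hv] := Qinv z Qz; exists v => k; left.
  - have [v Hv] := Qinv _ Qm.
    exists (concat_control (m - i) (fun l => w (l + i)%N) v) => k.
    case: (leqP k (m - i)) => Hk.
      rewrite phi_concat_prefix // -phi_shift; right; exists (k + i)%N => //.
      by rewrite -(subnK Hi) leq_add2r.
    by rewrite -(subnK (ltnW Hk)) phi_concat_suffix -phi_shift subnK //; left.
  - exact: Dreach.
  - apply: subset_trans (Dreach _ Qm) (closure_orbit_reach _).
    by exists (m - i)%N, (fun l => w (l + i)%N); rewrite -phi_shift subnK.
move=> i Hi; rewrite -(Qmax D Dcond (fun z Hz => or_introl Hz)); right.
by exists i.
Qed.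

Lemma steer_into_ball (Q : set X) x c (r eta : R) :
  control_set d F Q -> Q x -> 0 < r -> mball d c r `<=` Q -> 0 < eta ->
  exists m, exists w, exists2 del, 0 < del & forall y, d x y < del ->
    (forall l, (l < m)%N -> dist_set d (phi F l y w) Q <= eta) /\
    mball d c r (phi F m y w).
Proof.
move=> hQ Qx r_gt0 cQ eta_gt0.
have Qc : Q c by apply/cQ/mball_center.
have r2_gt0 : 0 < r / 2 by rewrite divr_gt0.
have [_ [m [w ->]] Hca] := hQ.1.2 x Qx c Qc (r / 2) r2_gt0.
have Qa : Q (phi F m x w).
  by apply: cQ; apply: lt_trans Hca _; rewrite ltr_pdivrMr // ltr_pMr // ltr1n.
have Qpath := trajectory_in_control_set hQ Qx Qa.
pose g := Order.min (r / 2) eta.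
have g_gt0 : 0 < g by rewrite lt_min r2_gt0 eta_gt0.
have [del del_gt0 Hdel] := @finite_common_radius R m.+1 (fun l del => forall y,
    d x y < del -> d (phi F l x w) (phi F l y w) < g)
  (fun l r r' _ Hr H y Hy => H y (lt_le_trans Hy Hr))
  (fun l _ => phi_cont_state hdU hphi l x w g_gt0).
exists m, w, del => // y Hy; split => [l Hl|].
  apply: le_trans (dist_set_le hd _ (Qpath l (ltnW Hl))) _.
  rewrite metric_sym //; apply/ltW/(lt_le_trans (Hdel l (ltnW Hl) y Hy)).
  by rewrite ge_min lexx orbT.
apply: le_lt_trans (metric_triangle hd c (phi F m x w) _) _.
rewrite (splitr r); apply: ltrD => //.
by apply: lt_le_trans (Hdel m (ltnSn m) y Hy) _; rewrite ge_min lexx.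
Qed.

End ControlSets.

Lemma finite_closed_cover_ball (R : realType) (X : Type) (d : X -> X -> R)
    (A : nat -> set X) (N : nat) (c : X) (r : R) :
  is_metric d -> (forall i, mclosure d (A i) `<=` A i) -> 0 < r ->
  mball d c r `<=` [set y | exists2 i, (i < N)%N & A i y] ->
  exists2 i, (i < N)%N & exists c', exists2 r', 0 < r' &
    mball d c' r' `<=` mball d c r `&` A i.
Proof.
move=> hd Aclosed; elim: N c r => [|N IH] c r r_gt0 Hcov.
  by have [] := Hcov c (mball_center hd c r_gt0).
have [[c' [r' r'_gt0 [Hsub Hmiss]]]|Hmeet] := pselect (exists c', exists2 r', 0 < r' &
    mball d c' r' `<=` mball d c r /\ forall y, mball d c' r' y -> ~ A N y).
  have [|i Hi [c'' [r'' r''_gt0 Hsub']]] := IH c' r' r'_gt0.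
    move=> y Hy; have [i Hi HA] := Hcov y (Hsub y Hy); exists i => //.
    by move: Hi; rewrite ltnS leq_eqVlt => /orP [/eqP Ei|//]; case: (Hmiss y); rewrite -?Ei.
  exists i; first exact: leqW.
  by exists c'', r'' => // z /Hsub' [/Hsub].
have r2_gt0 : 0 < r / 2 by rewrite divr_gt0.
have r2_lt : r / 2 < r by rewrite ltr_pdivrMr // ltr_pMr // ltr1n.
exists N => //; exists c, (r / 2) => // y Hy; split; first exact: lt_trans Hy r2_lt.
apply: Aclosed => s s_gt0; pose s' := Order.min s (r / 2).
have s'_gt0 : 0 < s' by rewrite lt_min s_gt0 r2_gt0.
apply: contrapT => Hfar; apply: Hmeet; exists y, s' => //; split => [z Hz|z Hz HA].
  apply: le_lt_trans (metric_triangle hd c y z) _; rewrite (splitr r).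
  by apply: ltrD => //; apply: lt_le_trans Hz _; rewrite ge_min lexx orbT.
by apply: Hfar; exists z => //; apply: lt_le_trans Hz _; rewrite ge_min lexx.
Qed.

(* The cluster point is built one
   coordinate at a time, each step using the compactness of U. *)
Section ProductCluster.
Variable R : realType.
Variables (U : Type) (dU : U -> U -> R).
Hypothesis hdU : is_metric dU.
Hypothesis hcU : mcompact dU setT.
Variable h : nat -> nat -> U.

Definition cluster_prefix (J : nat) (g : nat -> U) : Prop :=
  forall (eta : R) M, 0 < eta ->
    exists n, (M <= n)%N /\ forall i, (i < J)%N -> dU (g i) (h n i) < eta.

Definition set_coord (g : nat -> U) (J : nat) (p : U) : nat -> U :=
  fun i => if i == J then p else g i.

Lemma cluster_prefix_eq J g g' : (forall i, (i < J)%N -> g i = g' i) ->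
  cluster_prefix J g -> cluster_prefix J g'.
Proof.
move=> Egg' Hg eta M eta_gt0; have [n [Mn Hn]] := Hg eta M eta_gt0.
by exists n; split => // i Hi; rewrite -(Egg' i Hi); apply: Hn.
Qed.

(* A cluster point on J coordinates extends to one on J + 1 coordinates;
   otherwise every p in U is excluded by some eta_p and M_p, and a finite
   subcover of the balls B(p, eta_p) yields a contradiction. *)
Lemma cluster_prefix_extend J g : cluster_prefix J g ->
  exists p, cluster_prefix J.+1 (set_coord g J p).
Proof.
move=> Hg; apply: contrapT => Hno.
have Hbad p : exists eM : R * nat, 0 < eM.1 /\ forall n, (eM.2 <= n)%N ->
    exists2 i, (i < J.+1)%N & eM.1 <= dU (set_coord g J p i) (h n i).
  apply: contrapT => Hp; apply: Hno; exists p => eta M eta_gt0.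
  apply: contrapT => Hn; apply: Hp; exists (eta, M); split => // n Mn.
  apply: contrapT => Hi; apply: Hn; exists n; split => // i Hi'.
  by rewrite ltNge; apply/negP => Hle; apply: Hi; exists i.
have [bad Hbad'] := choice Hbad.
have Hcover : [set: U] `<=` \bigcup_p mball dU p (bad p).1.
  by move=> p _; exists p => //; apply: mball_center (Hbad' p).1.
have [s Hs] := hcU (fun p => mball_open hdU p (bad p).1) Hcover.
pose q j := List.nth j s (g 0%N).
have [T [eta eta_gt0 Hunif]] := @finite_common_parameters R (size s)
    (fun j T r => r <= (bad (q j)).1 /\ ((bad (q j)).2 <= T)%N)
  (fun j T T' r r' HT _ Hr H => conj (le_trans Hr H.1) (leq_trans H.2 HT))
  (fun j _ => ex_intro _ (bad (q j)).2 (ex_intro2 _ _ (bad (q j)).1 (Hbad' _).1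
                                         (conj (lexx _) (leqnn _)))).
have [n [Tn Hn]] := Hg eta T eta_gt0.
have [p Hps Hpn] := Hs (h n J) I.
have [j [Hj Ej]] := List.In_nth s p (g 0%N) Hps.
have Hjs : (j < size s)%N by apply/ssrnat.ltP; rewrite size_length.
have [eta_le Tle] := Hunif j Hjs; rewrite /q Ej in eta_le Tle.
have [i Hi] := (Hbad' p).2 n (leq_trans Tle Tn).
rewrite /set_coord; case: eqP => [->|/eqP iJ]; first by rewrite leNgt Hpn.
have Hij : (i < J)%N by rewrite ltn_neqAle iJ -ltnS.
by rewrite leNgt (lt_le_trans (Hn i Hij) eta_le).
Qed.

Lemma product_cluster_point (u0 : U) :
  exists G : nat -> U, forall J, cluster_prefix J G.
Proof.
have Hstep (gJ : (nat -> U) * nat) : exists p,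
    cluster_prefix gJ.2 gJ.1 -> cluster_prefix gJ.2.+1 (set_coord gJ.1 gJ.2 p).
  have [/cluster_prefix_extend [p Hp]|Hn] := pselect (cluster_prefix gJ.2 gJ.1).
    by exists p.
  by exists u0.
have [step Hstep'] := choice Hstep.
pose fix pref J := if J is J'.+1 then set_coord (pref J') J' (step (pref J', J'))
                   else fun _ => u0.
have pref_cluster J : cluster_prefix J (pref J).
  elim: J => [|J IH] /=; last exact: (Hstep' (pref J, J)).
  by move=> eta M _; exists M.
have pref_stable J i : (i < J)%N -> pref J i = pref i.+1 i.
  elim: J => [//|J IH]; rewrite ltnS leq_eqVlt => /orP [/eqP ->//|HiJ] /=.
  by rewrite /set_coord (ltn_eqF HiJ) IH.
exists (fun i => pref i.+1 i) => J.
exact: cluster_prefix_eq (pref_stable J) (pref_cluster J).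
Qed.

End ProductCluster.

Section LimitControls.
Variable R : realType.
Variables (X U : Type) (d : X -> X -> R) (dU : U -> U -> R) (F : X -> U -> X).
Variable Q : set X.
Hypothesis hd : is_metric d.
Hypothesis hdU : is_metric dU.
Hypothesis hcU : mcompact dU setT.
Hypothesis hphi : phi_continuous d dU F.
Hypothesis Qne : exists q, Q q.

Lemma uniform_spanning_families (w0 : nat -> U) (eps : R) :
  bounded_inv_complexity_mean d F Q -> 0 < eps ->
  exists K : nat, exists g : nat -> nat -> (nat -> U), forall n x, Q x ->
    exists2 i, (i < K)%N &
      forall k, (1 <= k <= n.+1)%N -> mean_dist d F Q k x (g n i) < eps.
Proof.
move=> Hb eps_gt0; have [C HC] := Hb eps eps_gt0.
pose K := Num.Def.archi_bound `|C + 1|.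
have CK : C + 1 < K%:R by apply: le_lt_trans (ler_norm _) (archi_boundP _).
have Hfam n : exists Fs : seq (nat -> U),
    spanning_mean d F n.+1 eps Q Fs /\ (size Fs < K)%N.
  have : (r_inv_mean d F n.+1 eps Q < (C + 1)%:E)%E.
    by apply: le_lt_trans (HC n.+1 isT) _; rewrite lte_fin ltrDl.
  move/ereal_inf_lt => [_ [Fs HFs <-]]; rewrite lte_fin => HsizeC.
  by exists Fs; split => //; rewrite -(ltr_nat R); apply: lt_trans HsizeC CK.
have [Fam HFam] := choice Hfam.
exists K, (fun n i => List.nth i (Fam n) w0) => n x Qx.
have [Hspan Hsize] := HFam n.
move: Qx; rewrite {1}Hspan => -[w Hw [_ Hmean]].
have [i [Hi Ei]] := List.In_nth (Fam n) w w0 Hw.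
exists i; last by rewrite Ei.
by apply: ltn_trans Hsize; apply/ssrnat.ltP; rewrite size_length.
Qed.

Lemma mean_unbounded_robust (eps : R) x w : ~ mean_bounded d F Q eps w x ->
  exists T, exists2 r, 0 < r & forall w',
    (forall t, (t < T)%N -> dU (w t) (w' t) < r) ->
    exists k, (1 <= k <= T)%N /\ eps <= mean_dist d F Q k x w'.
Proof.
move=> Hx; have [k [k_gt0 Hk]] : exists k, (0 < k)%N /\ eps < mean_dist d F Q k x w.
  apply: contrapT => Hno; apply: Hx => k k_gt0.
  by rewrite leNgt; apply/negP => Hlt; apply: Hno; exists k.
have [T [r r_gt0 [kT Hr]]] := mean_lower_bound_stable hd hphi Qne k_gt0 Hk.
by exists T, r => // w' Hw'; exists k; rewrite k_gt0 kT; split => //; apply: Hr.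
Qed.

(* Interleaving the families g n as one sequence of controls and taking a
   product cluster point G, the K controls t |-> G (t K + i) work for all
   times: if all of them failed at x, each failure would persist near G,
   contradicting the spanning property of some g n close to G. *)
Lemma limit_controls (w0 : nat -> U) (eps : R) :
  bounded_inv_complexity_mean d F Q -> 0 < eps ->
  exists K : nat, exists Gc : nat -> nat -> U, forall x, Q x ->
    exists2 i, (i < K)%N & mean_bounded d F Q eps (Gc i) x.
Proof.
move=> Hb eps_gt0; have [K [g Hg]] := uniform_spanning_families w0 Hb eps_gt0.
have K_gt0 : (0 < K)%N.
  by case: Qne => q Qq; have [i Hi _] := Hg 0%N q Qq; apply: leq_ltn_trans Hi.
pose h n j := g n (j %% K)%N (j %/ K)%N.
have [G HG] := product_cluster_point hdU hcU h (w0 0%N).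
pose Gc i t := G (t * K + i)%N.
exists K, Gc => x Qx; apply: contrapT => Hno.
pose Fails i T r := forall w',
  (forall t, (t < T)%N -> dU (Gc i t) (w' t) < r) ->
  exists k, (1 <= k <= T)%N /\ eps <= mean_dist d F Q k x w'.
have Fails_mono i T T' r r' : (T <= T')%N -> 0 < r' -> r' <= r ->
    Fails i T r -> Fails i T' r'.
  move=> TT' _ rr' HF w' Hw'.
  have Hw'T t : (t < T)%N -> dU (Gc i t) (w' t) < r.
    by move=> Ht; apply: lt_le_trans (Hw' t (leq_trans Ht TT')) rr'.
  have [k [/andP [k_gt0 kT] Hk]] := HF w' Hw'T.
  by exists k; rewrite k_gt0 (leq_trans kT TT').
have Hfail i : (i < K)%N -> exists T, exists2 r, 0 < r & Fails i T r.
  by move=> Hi; apply: mean_unbounded_robust => HA; apply: Hno; exists i.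
have [T [r r_gt0 Hunif]] := finite_common_parameters Fails_mono Hfail.
have [n [Tn Hn]] := HG (T * K)%N r T r_gt0.
have [i Hi Hgi] := Hg n x Qx.
have Hclose t : (t < T)%N -> dU (Gc i t) (g n i t) < r.
  move=> Ht; have := Hn (t * K + i)%N ltac:(nia).
  by rewrite /h modnMDl (modn_small Hi) divnMDl // (divn_small Hi) addn0.
have [k [Hk Heps]] := Hunif i Hi (g n i) Hclose.
have : mean_dist d F Q k x (g n i) < eps.
  by apply: Hgi; case/andP: Hk => -> /= kT; apply: leq_trans kT (leq_trans Tn _).
by rewrite ltNge Heps.
Qed.

End LimitControls.

Section Equivalences.
Variable R : realType.
Variables (X U : Type) (d : X -> X -> R) (dU : U -> U -> R) (F : X -> U -> X).
Variable Q : set X.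
Hypothesis hd : is_metric d.
Hypothesis hdU : is_metric dU.
Hypothesis hcU : mcompact dU setT.
Hypothesis hphi : phi_continuous d dU F.

Lemma equi_to_finitely :
  equi_invariant_mean d F Q -> finitely_equi_invariant_mean d F Q.
Proof.
move=> Heq x Qx; have [_ Hx] := Heq x Qx; split => // e e_gt0.
have [del [w [del_gt0 Hw]]] := Hx e e_gt0.
by exists del, [:: w]; split => // y Hy Qy; exists w; [left | apply: Hw].
Qed.

(* Cover the compact set Q by finitely many of the balls in the definition
   of finite equi-invariance; the union of the associated families spans Q
   in the mean for every horizon n. *)
Lemma finitely_to_bounded : mcompact d Q ->
  finitely_equi_invariant_mean d F Q -> bounded_inv_complexity_mean d F Q.
Proof.
move=> Qcpt Hfin e e_gt0.
have Hloc (x : {x : X | Q x}) : exists p : R * seq (nat -> U), 0 < p.1 /\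
    forall y, mball d (proj1_sig x) p.1 y -> Q y ->
      exists2 w, List.In w p.2 & forall n, (0 < n)%N -> mean_dist d F Q n y w < e.
  case: x => [x Qx] /=; have [_ Hx] := Hfin x Qx.
  by have [del [Fs [del_gt0 HFs]]] := Hx e e_gt0; exists (del, Fs).
have [loc Hloc'] := choice Hloc.
have Hcover : Q `<=` \bigcup_x mball d (proj1_sig x) (loc x).1.
  by move=> y Qy; exists (exist _ y Qy) => //; apply: mball_center (Hloc' _).1.
have [s Hs] := Qcpt _ _ (fun x => mball_open hd (proj1_sig x) (loc x).1) Hcover.
pose Fs := List.flat_map (fun x => (loc x).2) s.
exists (size Fs)%:R => n _; apply: ge_ereal_inf.
exists ((size Fs)%:R)%:E => //; exists Fs => //.
apply/seteqP; split => [y Qy|y [_ _ [Qy _]]] //.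
have [x Hxs Hyx] := Hs y Qy; have [w Hw Hmean] := (Hloc' x).2 y Hyx Qy.
exists w; first by apply/List.in_flat_map; exists x.
by split => // k /andP [k_gt0 _]; apply: Hmean.
Qed.

(* Given x in Q: finitely many limit controls Gc i cover Q by the closed sets
   A_i of points whose means under Gc i stay below e/2; by the Baire-type
   lemma one A_i contains a ball inside the interior of Q.  Steering from
   near x into that ball and then switching to Gc i gives one control that
   works for all initial states near x. *)
Lemma bounded_to_equi : control_set d F Q -> nonempty_interior d Q ->
  bounded_inv_complexity_mean d F Q -> equi_invariant_mean d F Q.
Proof.
move=> hQ [c0 [r0 r0_gt0 ball0Q]] Hb x Qx; split => // e e_gt0.
have Qc0 : Q c0 by apply/ball0Q/mball_center.
have Qne : exists q, Q q by exists c0.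
have [w0 _] := hQ.1.1 c0 Qc0.
have e2_gt0 : 0 < e / 2 by rewrite divr_gt0.
have [K [Gc HGc]] := limit_controls hd hdU hcU hphi Qne w0 Hb e2_gt0.
have [i _ [c [r r_gt0 ballA]]] := finite_closed_cover_ball hd
  (fun i => mean_bounded_closed hd hdU hphi Qne (eps := e / 2) (w := Gc i)) r0_gt0
  (fun y Hy => HGc y (ball0Q y Hy)).
have ballQ : mball d c r `<=` Q by move=> z /ballA [/ball0Q].
have [m [w [del del_gt0 Hsteer]]] :=
  steer_into_ball hd hdU hphi hQ Qx r_gt0 ballQ e2_gt0.
exists del, (concat_control m w (Gc i)); split => // y Hy _ n n_gt0.
apply: le_lt_trans (_ : e / 2 < e); last by rewrite ltr_pdivrMr // ltr_pMr // ltr1n.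
have [Hhead Hend] := Hsteer y Hy.
by apply: mean_dist_concat => //; have [] := ballA _ Hend.
Qed.

End Equivalences.

Theorem mainTheorem6 (R : realType) (X U : Type)
  (d : X -> X -> R) (dU : U -> U -> R) (F : X -> U -> X) (Q : set X) :
  is_metric d -> is_metric dU -> mcompact dU setT ->
  (forall u : U, mcontinuous d d (fun x => F x u)) ->
  phi_continuous d dU F ->
  mcompact d Q -> control_set d F Q -> nonempty_interior d Q ->
  (equi_invariant_mean d F Q <-> finitely_equi_invariant_mean d F Q) /\
  (finitely_equi_invariant_mean d F Q <-> bounded_inv_complexity_mean d F Q).
Proof.
move=> hd hdU hcU _ hphi Qcpt hQ Qint.
have fin_bnd := finitely_to_bounded hd Qcpt.
have bnd_equi := bounded_to_equi hd hdU hcU hphi hQ Qint.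
split; split => [|Hfin].
- exact: equi_to_finitely.
- exact/bnd_equi/fin_bnd.
- exact: fin_bnd.
- exact/equi_to_finitely/bnd_equi.
Qed.
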